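(* Let $C>0$. Consider four sites $s\in\{1,2,3,4\}$ with scalar covariates $X_s=s$. The experimental sites are $\mathcal{S}_E=\{1,4\}$, the policy sites are $\mathcal{S}_P=\{2,3\}$, and at most $k=1$ site may be sampled, so the feasible sampling sets are $\mathcal{A}(1)=\{\emptyset,\{1\},\{4\}\}$. Let $\Theta$ be the set of vectors $(\tau_1,\tau_2,\tau_3,\tau_4)\in\mathbb{R}^4$ with $|\tau_s-\tau_t|\le C|s-t|$ for all $s,t$; equivalently, $\tau_s=\tau(s)$ for some $C$-Lipschitz $\tau:\mathbb{R}\to\mathbb{R}$. Signals are noiseless: if $\mathscr{S}$ is sampled, the policy maker observes exactly $(\tau_s)_{s\in\mathscr{S}}$. A treatment rule for $\mathscr{S}$ is a measurable map $T^{\mathscr{S}}$ from the observations to actions $(a_2,a_3)\in[0,1]^2$. The regret of actions $(a_2,a_3)$ is $\frac12\sum_{s\in\{2,3\}}\tau_s(\mathbf{1}\{\tau_s\ge0\}-a_s)$. A randomized design consists of a probability distribution $p$ on $\mathcal{A}(1)$ together with a treatment rule $T^{\mathscr{S}}$ for each $\mathscr{S}\in\mathcal{A}(1)$. Its worst-case regret is the supremum over $\tau\in\Theta$ of the $p$-expected regret; here the parameter $\tau$ is fixed before the sampled set is drawn. A purposive design is a randomized design in which $p$ is a point mass. Then: (1) the infimum of worst-case regret over all randomized designs equals $C/2$, and it is attained; (2) the infimum of worst-case regret over all purposive designs equals $3C/4$, and it is attained.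
   Context: This is a stylized example comparing randomized and purposive (nonrandom) selection of experimental sites under minimax regret. The adversarial parameter is chosen before the randomization over sampling sets is realized, and it is the same for all realizations of the sampled set. *)

From HB Require Import structures.
From mathcomp Require Import all_boot all_order all_algebra.
From mathcomp Require Import all_classical all_reals all_analysis.
Set Implicit Arguments. Unset Strict Implicit. Unset Printing Implicit Defensive.
Import Order.TTheory GRing.Theory Num.Theory.
Local Open Scope classical_set_scope.
Local Open Scope ring_scope.

Section Defs.
Variable R : realType.

(* Sites s = 1,2,3,4 are represented by i : 'I_4 with s = i+1. *)
Definition site1 : 'I_4 := @Ordinal 4 0 isT.
Definition site2 : 'I_4 := @Ordinal 4 1 isT.
Definition site3 : 'I_4 := @Ordinal 4 2 isT.
Definition site4 : 'I_4 := @Ordinal 4 3 isT.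

Definition covX (i : 'I_4) : R := (i.+1)%:R.

Definition Theta (C : R) : set ('I_4 -> R) :=
  [set tau | forall i j : 'I_4, `|tau i - tau j| <= C * `|covX i - covX j| ].

Definition regret (tau : 'I_4 -> R) (a : R * R) : R :=
  2^-1 * (tau site2 * (((0 <= tau site2)%R)%:R - a.1)
        + tau site3 * (((0 <= tau site3)%R)%:R - a.2)).

(* A randomized design: probabilities of sampling sets {}, {1}, {4},
   an action for the empty set (no observations), and treatment rules
   mapping the (noiseless) observation tau_1 resp. tau_4 to actions. *)
Record design := Design {
  p_empty : R; p_one : R; p_four : R;
  rule_empty : R * R;
  rule_one : R -> R * R;
  rule_four : R -> R * R }.

Definition in01 (a : R * R) : Prop :=
  0 <= a.1 <= 1 /\ 0 <= a.2 <= 1.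

Definition valid_design (d : design) : Prop :=
  (0 <= p_empty d /\ 0 <= p_one d /\ 0 <= p_four d /\
   p_empty d + p_one d + p_four d = 1) /\
  (in01 (rule_empty d) /\ (forall x, in01 (rule_one d x)) /\
   (forall x, in01 (rule_four d x))) /\
  (measurable_fun setT (fun x => (rule_one d x).1) /\
   measurable_fun setT (fun x => (rule_one d x).2) /\
   measurable_fun setT (fun x => (rule_four d x).1) /\
   measurable_fun setT (fun x => (rule_four d x).2)).

Definition purposive (d : design) : Prop :=
  valid_design d /\ (p_empty d = 1 \/ p_one d = 1 \/ p_four d = 1).

Definition exp_regret (d : design) (tau : 'I_4 -> R) : R :=
  p_empty d * regret tau (rule_empty d)
  + p_one d * regret tau (rule_one d (tau site1))
  + p_four d * regret tau (rule_four d (tau site4)).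

Definition worst_regret (C : R) (d : design) : \bar R :=
  ereal_sup [set (exp_regret d tau)%:E | tau in Theta C].

End Defs.

From HB Require Import structures.
From mathcomp Require Import all_boot all_order all_algebra.
From mathcomp Require Import all_classical all_reals all_analysis.
From mathcomp Require Import ring lra.
Set Implicit Arguments. Unset Strict Implicit. Unset Printing Implicit Defensive.
Import Order.TTheory GRing.Theory Num.Theory.
Local Open Scope classical_set_scope.
Local Open Scope ring_scope.

(* Lower bounds: pair a parameter with its mirror image, which flips the signs of
   tau_2 and tau_3 but agrees on every site sampled with positive probability; for
   any action the two regrets then average to (tau_2 + tau_3) / 4. A randomized
   design must leave both endpoints undisturbed, which still allows
   tau_2 = tau_3 = C. A point mass on {1} (or {4}) leaves the far endpoint free, so
   the policy sites can reach C and 2C; with no sample at all both can be 3C/2.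
   Upper bounds: treat a policy site with the probability clip D x that rises
   linearly from 0 to 1 as the observed effect x crosses [-D, D], where D bounds
   the distance from the observed site; this costs at most D/2 at that site, which
   gives 3C/4 for sampling {1} with D = C at site 2 and D = 2C at site 3. Mixing
   {1} and {4} with weight 1/2 and using D = C at both policy sites gives C/2 in
   total, by a joint case analysis on the two sites. *)

Section Regret.
Variable R : realType.
Implicit Types (C D t u v x y : R) (tau : 'I_4 -> R).

Definition clip D x : R := Num.min 1 (Num.max 0 ((x + D) / (2 * D))).

Lemma clipP D x : 0 < D ->
  [\/ x <= - D /\ clip D x = 0, D <= x /\ clip D x = 1
    | - D < x < D /\ 2 * D * clip D x = x + D].
Proof.
move=> D_gt0; rewrite /clip; have D2_gt0 : 0 < 2 * D by lra.
case: (lerP x (- D)) => [xlo|xlo].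
  have r_le0 : (x + D) / (2 * D) <= 0 by rewrite pmulr_lle0 ?invr_gt0 //; lra.
  by constructor 1; rewrite (max_idPl r_le0) (min_idPr ler01).
case: (lerP D x) => [xhi|xhi].
  have r_ge1 : 1 <= (x + D) / (2 * D) by rewrite ler_pdivlMr //; lra.
  by constructor 2; rewrite (max_idPr (le_trans ler01 r_ge1)) (min_idPl r_ge1).
have r_ge0 : 0 <= (x + D) / (2 * D) by rewrite divr_ge0 //; lra.
have r_le1 : (x + D) / (2 * D) <= 1 by rewrite ler_pdivrMr //; lra.
constructor 3; split; first exact/andP.
by rewrite (max_idPr r_ge0) (min_idPr r_le1) mulrC divfK //; lra.
Qed.

Lemma clip_in01 D x : 0 < D -> 0 <= clip D x <= 1.
Proof.
move=> D_gt0; have D2_gt0 : 0 < 2 * D by lra.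
case: (clipP x D_gt0) => [[_ ->]|[_ ->]|[x_in e]]; try by rewrite lexx ler01.
have /andP[lo hi] : 0 <= 2 * D * clip D x <= 2 * D * 1 by rewrite e; move: x_in => /andP[]; lra.
by rewrite -(pmulr_rge0 _ D2_gt0) lo -(ler_pM2l D2_gt0) hi.
Qed.

Lemma measurable_clip D : measurable_fun setT (clip D).
Proof.
apply: measurable_realfun.measurable_minr; first exact: measurable_cst.
apply: measurable_realfun.measurable_maxr; first exact: measurable_cst.
apply: measurable_realfun.measurable_funM; last exact: measurable_cst.
by apply: measurable_realfun.measurable_funD; [exact: measurable_id | exact: measurable_cst].
Qed.

Definition site_regret t (a : R) : R := t * (((0 <= t)%R)%:R - a).

Lemma regretE tau a :
  regret tau a = 2^-1 * (site_regret (tau site2) a.1 + site_regret (tau site3) a.2).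
Proof. by []. Qed.

Lemma site_regret_opp t a : 0 < t -> site_regret t a + site_regret (- t) a = t.
Proof.
by move=> t_gt0; rewrite /site_regret oppr_ge0 (ltW t_gt0) leNgt t_gt0 /=; ring.
Qed.

Lemma site_regret_clip_le D x t : 0 < D -> `|x - t| <= D -> site_regret t (clip D x) <= D / 2.
Proof.
move=> D_gt0; rewrite ler_norml => /andP[lo hi]; rewrite /site_regret.
have D2_gt0 : 0 < 2 * D by lra.
case: (clipP x D_gt0) => [[xlo ->]|[xhi ->]|[/andP[xlo xhi] e]];
  case: (lerP 0 t) => t_sgn; rewrite ?mulr1n ?mulr0n; try nra.
all: rewrite -(ler_pM2l D2_gt0).
- have : 0 <= (x + D - t) * (D - x) by apply: mulr_ge0; lra.
  by have /= := congr1 ( *%R^~ t) e; nra.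
- have : 0 <= (t - x + D) * (x + D) by apply: mulr_ge0; lra.
  by have /= := congr1 ( *%R^~ t) e; nra.
Qed.

Lemma site_regret_clip_ends_le C u t2 t3 v : 0 < C ->
  `|u - t2| <= C -> `|t2 - t3| <= C -> `|t3 - v| <= C ->
  site_regret t2 (clip C u) + site_regret t2 (clip C v)
  + site_regret t3 (clip C u) + site_regret t3 (clip C v) <= 2 * C.
Proof.
move=> C_gt0; rewrite !ler_norml => /andP[h1 h1'] /andP[h2 h2'] /andP[h3 h3'].
have C2_gt0 : 0 < 2 * C by lra.
rewrite /site_regret.
case: (clipP u C_gt0) => [[ulo ->]|[uhi ->]|[/andP[ulo uhi] eu]];
case: (clipP v C_gt0) => [[vlo ->]|[vhi ->]|[/andP[vlo vhi] ev]];
case: (lerP 0 t2) => s2; case: (lerP 0 t3) => s3; rewrite ?mulr1n ?mulr0n; try nra.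
all: rewrite -(ler_pM2l C2_gt0).
(* Multiplying the ramp equations by t2 and t3 gives nra the products it needs. *)
all: try have /= := congr1 ( *%R^~ t2) eu; try have /= := congr1 ( *%R^~ t3) eu.
all: try have /= := congr1 ( *%R^~ t2) ev; try have /= := congr1 ( *%R^~ t3) ev.
1-4: by nra.
- have : 0 <= (u + v + 2 * C - t2 - t3) * (2 * C - u - v) by apply: mulr_ge0; lra.
  have := sqr_ge0 (u + v); nra.
- have : 0 <= (t2 + t3 - u - v + 2 * C) * (u + v + 2 * C) by apply: mulr_ge0; lra.
  have := sqr_ge0 (u + v); nra.
Qed.

Lemma normr_natrB (k l : nat) :
  `|k%:R - l%:R : R| = (if (l <= k)%N then (k - l)%N else (l - k)%N)%:R.
Proof.
case: leqP => [le_lk|/ltnW le_kl]; first by rewrite -natrB // ger0_norm.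
by rewrite -opprB -natrB // normrN ger0_norm.
Qed.

Definition tau4 (a b c e : R) : 'I_4 -> R := fun i => nth 0 [:: a; b; c; e] i.

Lemma Theta_tau4 C a b c e :
  `|a - b| <= C -> `|b - c| <= C -> `|c - e| <= C -> Theta C (tau4 a b c e).
Proof.
rewrite !ler_norml => /andP[h1 h1'] /andP[h2 h2'] /andP[h3 h3'].
move=> [[|[|[|[|i]]]] hi] [[|[|[|[|j]]]] hj] //.
all: rewrite /tau4 /covX normr_natrB ler_norml /subn /=; apply/andP; split; lra.
Qed.

Lemma Theta_steps C tau : Theta C tau ->
  [/\ `|tau site1 - tau site2| <= C, `|tau site2 - tau site3| <= C
    & `|tau site3 - tau site4| <= C].
Proof.
by move=> lip; split; [move: (lip site1 site2) | move: (lip site2 site3) | move: (lip site3 site4)];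
  rewrite /covX normr_natrB /subn /= mulr1.
Qed.

Lemma regret_opp (act : R * R) y2 y3 a a' e e' : 0 < y2 -> 0 < y3 ->
  regret (tau4 a y2 y3 e) act + regret (tau4 a' (- y2) (- y3) e') act = (y2 + y3) / 2.
Proof.
move=> y2_gt0 y3_gt0; rewrite !regretE /= -mulrDr addrACA.
by rewrite !site_regret_opp // mulrC.
Qed.

Lemma exp_regret_opp (d : design R) y2 y3 a a' e e' :
  p_empty d + p_one d + p_four d = 1 -> 0 < y2 -> 0 < y3 ->
  p_one d = 0 \/ a = a' -> p_four d = 0 \/ e = e' ->
  exp_regret d (tau4 a y2 y3 e) + exp_regret d (tau4 a' (- y2) (- y3) e')
  = (y2 + y3) / 2.
Proof.
move=> p_sum y2_gt0 y3_gt0 same_one same_four.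
have mass p (rule : R -> R * R) x x' : p = 0 \/ x = x' ->
    p * regret (tau4 a y2 y3 e) (rule x) + p * regret (tau4 a' (- y2) (- y3) e') (rule x')
    = p * ((y2 + y3) / 2).
  by case=> [->|<-]; rewrite ?mul0r ?addr0 // -mulrDr regret_opp.
rewrite /exp_regret addrACA [X in X + _]addrACA -mulrDr regret_opp //.
by rewrite (mass _ _ _ _ same_one) (mass _ _ _ _ same_four) -!mulrDl p_sum mul1r.
Qed.

Lemma worst_regret_ge C (d : design R) tau :
  Theta C tau -> ((exp_regret d tau)%:E <= worst_regret C d)%E.
Proof. by move=> Theta_tau; apply: ereal_sup_ubound; exists tau. Qed.

Lemma worst_regret_le C (d : design R) M :
  (forall tau, Theta C tau -> exp_regret d tau <= M) -> (worst_regret C d <= M%:E)%E.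
Proof. by move=> bound; apply: ge_ereal_sup => _ [tau /bound + <-]; rewrite lee_fin. Qed.

Lemma worst_regret_ge_avg C (d : design R) tau tau' : Theta C tau -> Theta C tau' ->
  (((exp_regret d tau + exp_regret d tau') / 2)%:E <= worst_regret C d)%E.
Proof.
move=> Theta_tau Theta_tau'.
case: (lerP ((exp_regret d tau + exp_regret d tau') / 2) (exp_regret d tau)) => avg_le.
  by apply: le_trans (worst_regret_ge d Theta_tau); rewrite lee_fin.
by apply: le_trans (worst_regret_ge d Theta_tau'); rewrite lee_fin; lra.
Qed.

Lemma worst_regret_ge_opp C (d : design R) y2 y3 a a' e e' :
  p_empty d + p_one d + p_four d = 1 -> 0 < y2 -> 0 < y3 ->
  p_one d = 0 \/ a = a' -> p_four d = 0 \/ e = e' ->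
  Theta C (tau4 a y2 y3 e) -> Theta C (tau4 a' (- y2) (- y3) e') ->
  (((y2 + y3) / 4)%:E <= worst_regret C d)%E.
Proof.
move=> p_sum y2_gt0 y3_gt0 same_one same_four Theta_tau Theta_tau'.
have -> : (y2 + y3) / 4 = (y2 + y3) / 2 / 2 by field.
rewrite -(exp_regret_opp p_sum y2_gt0 y3_gt0 same_one same_four).
exact: worst_regret_ge_avg.
Qed.

Lemma valid_worst_regret_ge C (d : design R) : 0 < C -> valid_design d ->
  ((C / 2)%:E <= worst_regret C d)%E.
Proof.
move=> C_gt0 [[_ [_ [_ p_sum]]] _].
have -> : C / 2 = (C + C) / 4 by field.
apply: (worst_regret_ge_opp (a := 0) (a' := 0) (e := 0) (e' := 0)) => //; try by right.
all: by apply: Theta_tau4; rewrite ler_norml; lra.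
Qed.

Lemma purposive_worst_regret_ge C (d : design R) : 0 < C -> purposive d ->
  ((3 * C / 4)%:E <= worst_regret C d)%E.
Proof.
move=> C_gt0 [[[pe_ge0 [p1_ge0 [p4_ge0 p_sum]]] _] point_mass].
case: point_mass => [pe1|[p11|p41]].
- have -> : 3 * C / 4 = (3 * C / 2 + 3 * C / 2) / 4 by field.
  apply: (worst_regret_ge_opp (a := 3 * C / 2) (a' := - (3 * C / 2))
            (e := 3 * C / 2) (e' := - (3 * C / 2))) => //; try (left; lra); try lra;
  by apply: Theta_tau4; rewrite ler_norml; lra.
- have -> : 3 * C / 4 = (C + 2 * C) / 4 by field.
  apply: (worst_regret_ge_opp (a := 0) (a' := 0) (e := 3 * C) (e' := - (3 * C))) => //;
    try (by right); try (left; lra); try lra;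
  by apply: Theta_tau4; rewrite ler_norml; lra.
- have -> : 3 * C / 4 = (2 * C + C) / 4 by field.
  apply: (worst_regret_ge_opp (a := 3 * C) (a' := - (3 * C)) (e := 0) (e' := 0)) => //;
    try (by right); try (left; lra); try lra;
  by apply: Theta_tau4; rewrite ler_norml; lra.
Qed.

Definition randomized_design C : design R :=
  Design 0 (1 / 2) (1 / 2) (0, 0)
    (fun x => (clip C x, clip C x)) (fun x => (clip C x, clip C x)).

Definition purposive_design C : design R :=
  Design 0 1 0 (0, 0) (fun x => (clip C x, clip (2 * C) x)) (fun=> (0, 0)).

Lemma in01_00 : in01 ((0 : R), (0 : R)).
Proof. by rewrite /in01 /= lexx ler01. Qed.

Lemma randomized_design_valid C : 0 < C -> valid_design (randomized_design C).
Proof.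
move=> C_gt0; split; first by rewrite /=; lra.
split; first by split; [exact: in01_00 | split=> x; split; exact: clip_in01].
by split; [|split; [|split]]; exact: measurable_clip.
Qed.

Lemma purposive_design_purposive C : 0 < C -> purposive (purposive_design C).
Proof.
move=> C_gt0; have C2_gt0 : 0 < 2 * C by lra.
split; last by right; left.
split; first by rewrite /=; lra.
split; first by split; [exact: in01_00 | split=> x; [split; exact: clip_in01 | exact: in01_00]].
by split; [|split; [|split]]; (exact: measurable_clip || exact: measurable_cst).
Qed.

Lemma randomized_design_worst_regret C : 0 < C ->
  worst_regret C (randomized_design C) = (C / 2)%:E.
Proof.
move=> C_gt0; apply/le_anti/andP; split; last first.
  exact/valid_worst_regret_ge/randomized_design_valid.
apply: worst_regret_le => tau /Theta_steps[step12 step23 step34].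
have := site_regret_clip_ends_le C_gt0 step12 step23 step34.
rewrite /exp_regret !regretE /=; lra.
Qed.

Lemma purposive_design_worst_regret C : 0 < C ->
  worst_regret C (purposive_design C) = (3 * C / 4)%:E.
Proof.
move=> C_gt0; apply/le_anti/andP; split; last first.
  exact/purposive_worst_regret_ge/purposive_design_purposive.
apply: worst_regret_le => tau /Theta_steps[step12 step23 _].
have step13 : `|tau site1 - tau site3| <= 2 * C.
  by move: step12 step23; rewrite !ler_norml; lra.
have C2_gt0 : 0 < 2 * C by lra.
have := site_regret_clip_le C_gt0 step12; have := site_regret_clip_le C2_gt0 step13.
rewrite /exp_regret !regretE /=; lra.
Qed.

End Regret.

Lemma ereal_inf_attained (R : realType) (T : Type) (P : set T) (f : T -> \bar R) x :
  P x -> (forall y, P y -> (f x <= f y)%E) -> ereal_inf (f @` P) = f x.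
Proof.
move=> Px f_min; apply/le_anti/andP; split; first by apply: ereal_inf_lbound; exists x.
by apply: le_ereal_inf_tmp => _ [y Py <-]; exact: f_min.
Qed.

Theorem lemmaB1 (R : realType) (C : R) (hC : 0 < C) :
  (ereal_inf [set worst_regret C d | d in @valid_design R] = (C / 2)%:E
   /\ exists d, valid_design d /\ worst_regret C d = (C / 2)%:E)
  /\
  (ereal_inf [set worst_regret C d | d in @purposive R] = (3 * C / 4)%:E
   /\ exists d, purposive d /\ worst_regret C d = (3 * C / 4)%:E).
Proof.
have rand_valid := randomized_design_valid hC.
have rand_worst := randomized_design_worst_regret hC.
have purp := purposive_design_purposive hC.
have purp_worst := purposive_design_worst_regret hC.
split; split.
- rewrite -rand_worst; apply: ereal_inf_attained => // d d_valid.
  by rewrite rand_worst; exact: valid_worst_regret_ge.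
- by exists (randomized_design C).
- rewrite -purp_worst; apply: ereal_inf_attained => // d d_purp.
  by rewrite purp_worst; exact: purposive_worst_regret_ge.
- by exists (purposive_design C).
Qed.
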